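(* Let $H=(S_1,\dots,S_\ell)$ be a partial route and $\xi\in[N]$. Then there exists an optimal solution $(\bar\alpha,\bar\beta)$ of the dual of the linear program $$\mathcal{L}^*_\xi(H)=\min\Big\{\sum_{v\in V_+(H)}w_vy_v:\ y(V_+(H'))\ge k_\xi(V_+(H'))-1\ (H'\subseteq H),\ y_v\le b_v\ (v\in V_+),\ y\ge0\Big\},$$ where $\bar\alpha_{H'}\ge0$ is the multiplier of the constraint for $H'$ and $\bar\beta_v\le0$ that of $y_v\le b_v$, such that $\sum_{H'\subseteq H}\bar\alpha_{H'}\le\mathcal{L}^*_\xi(H)$ and $\sum_{H'\subseteq H:\,v\in V_+(H')}\bar\alpha_{H'}+\bar\beta_v\le0$ for every $v\in V_+$ with $w_v=0$.
   Context: $G=(V,E)$ complete undirected graph with $V=\{0\}\cup V_+$ ($V_+$ customers); $D=(V,A)$ replaces each edge by two opposite arcs. Capacity $C>0$; scenario demands $d^\xi\in\mathbb{Q}^{V_+}_{\ge0}$ with $d^\xi(v)\le C$. $f(S)=\sum_{i\in S}f(i)$, $k_\xi(S)=\lceil d^\xi(S)/C\rceil$. Fixed $w\in\mathbb{Q}^{V_+}_{\ge0}$ and $b\in\mathbb{Z}^{V_+}_{\ge0}$ such that for every route $R=(v_1,\dots,v_m)$ (cycle $0,v_1,\dots,v_m,0$ through distinct customers, $v_0=v_{m+1}=0$) and every scenario $\xi$ there is an integer vector $y\in[0,b]$ for which there exist $f_{(v_{i-1},v_i)}\in[0,C]$ and $g_{v_i}\ge0$ with $f_{(v_{i-1},v_i)}+d^\xi(v_i)=f_{(v_i,v_{i+1})}+g_{v_i}$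 and $g_{v_i}\le Cy_{v_i}$ for all $i\in[m]$. A partial route $H=(S_1,\dots,S_\ell)$ is a tuple of pairwise disjoint nonempty subsets of $V_+$ with no index $i$ such that both $S_i$ and $S_{i+1}$ have more than one element; $V_+(H)=\bigcup_iS_i$; $H'\subseteq H$ means $H'=(S_i,\dots,S_j)$ with $1\le i\le j\le\ell$. *)

From HB Require Import structures.
From mathcomp Require Import all_boot all_order all_algebra.
Set Implicit Arguments. Unset Strict Implicit. Unset Printing Implicit Defensive.
Import Order.TTheory GRing.Theory Num.Theory.
Local Open Scope ring_scope.

(* Customers V_+ form a finite type T; the depot 0 is implicit.
   Scenarios are indexed by 'I_N; d xi v is the demand of customer v. *)

Definition dem (T : finType) (dxi : T -> rat) (S : {set T}) : rat :=
  \sum_(v in S) dxi v.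

Definition kcap (T : finType) (C : rat) (dxi : T -> rat) (S : {set T}) : int :=
  Num.ceil (dem dxi S / C).

(* A route (v_1,...,v_m) is a
   duplicate-free sequence r; f i (0 <= i <= m) is the flow on the arc
   (v_i, v_{i+1}) in 1-based numbering with v_0 = v_{m+1} = depot, i.e. f i is
   the flow on the arc entering the customer at 0-based position i of r
   (and f m is the arc back to the depot). *)
Definition route_feasible (T : finType) (C : rat) (dxi : T -> rat)
    (b : T -> nat) (r : seq T) : Prop :=
  exists y : T -> nat, (forall v, (y v <= b v)%N) /\
  exists (f : nat -> rat) (g : T -> rat),
    (forall i, (i <= size r)%N -> 0 <= f i <= C) /\
    (forall i : 'I_(size r),
       let v := tnth (in_tuple r) i in
       [/\ f i + dxi v = f i.+1 + g v, 0 <= g v & g v <= C * (y v)%:R]).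

Definition standing_wb (T : finType) (N : nat) (C : rat)
    (d : 'I_N -> T -> rat) (b : T -> nat) : Prop :=
  forall (xi : 'I_N) (r : seq T), uniq r -> route_feasible C (d xi) b r.

Definition partial_route (T : finType) (H : seq {set T}) : Prop :=
  (forall i j, (i < size H)%N -> (j < size H)%N -> i <> j ->
     [disjoint nth set0 H i & nth set0 H j]) /\
  (forall i, (i < size H)%N -> nth set0 H i != set0) /\
  (forall i, (i.+1 < size H)%N ->
     ~ ((1 < #|nth set0 H i|)%N /\ (1 < #|nth set0 H i.+1|)%N)).

Definition VH (T : finType) (H : seq {set T}) : {set T} :=
  \bigcup_(S <- H) S.

(* V_+(H') for H' = (S_i,...,S_j), 0 <= i <= j < l *)
Definition Vsub (T : finType) (H : seq {set T}) (i j : nat) : {set T} :=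
  \bigcup_(t < size H | (i <= t <= j)%N) nth set0 H t.

Definition primal_feas (T : finType) (C : rat) (dxi : T -> rat) (b : T -> nat)
    (H : seq {set T}) (y : T -> rat) : Prop :=
  (forall i j : 'I_(size H), (i <= j)%N ->
     \sum_(v in Vsub H i j) y v >= (kcap C dxi (Vsub H i j))%:~R - 1) /\
  (forall v, y v <= (b v)%:R) /\ (forall v, 0 <= y v).

Definition primal_obj (T : finType) (w : T -> rat) (H : seq {set T})
    (y : T -> rat) : rat :=
  \sum_(v in VH H) w v * y v.

Definition alpha_at (T : finType) (H : seq {set T})
    (alpha : 'I_(size H) -> 'I_(size H) -> rat) (v : T) : rat :=
  \sum_(i < size H) \sum_(j < size H | (i <= j)%N && (v \in Vsub H i j)) alpha i j.

Definition alpha_sum (T : finType) (H : seq {set T})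
    (alpha : 'I_(size H) -> 'I_(size H) -> rat) : rat :=
  \sum_(i < size H) \sum_(j < size H | (i <= j)%N) alpha i j.

(* The dual LP: alpha_{H'} >= 0, beta_v <= 0, and for every v in V_+
   sum_{H' ni v} alpha_{H'} + beta_v <= (objective coefficient of y_v),
   which is w_v for v in V_+(H) and 0 otherwise.  Entries alpha i j with
   i > j are not variables (they never occur). *)
Definition dual_feas (T : finType) (w : T -> rat) (H : seq {set T})
    (alpha : 'I_(size H) -> 'I_(size H) -> rat) (beta : T -> rat) : Prop :=
  (forall i j : 'I_(size H), (i <= j)%N -> 0 <= alpha i j) /\
  (forall v, beta v <= 0) /\
  (forall v, alpha_at alpha v + beta v <= (if v \in VH H then w v else 0)).

Definition dual_obj (T : finType) (C : rat) (dxi : T -> rat) (b : T -> nat)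
    (H : seq {set T}) (alpha : 'I_(size H) -> 'I_(size H) -> rat)
    (beta : T -> rat) : rat :=
  \sum_(i < size H) \sum_(j < size H | (i <= j)%N)
      alpha i j * ((kcap C dxi (Vsub H i j))%:~R - 1)
  + \sum_v beta v * (b v)%:R.

From HB Require Import structures.
From mathcomp Require Import all_boot all_order all_algebra.
From mathcomp Require Import lra.
Set Implicit Arguments. Unset Strict Implicit. Unset Printing Implicit Defensive.
Import Order.TTheory GRing.Theory Num.Theory.
Local Open Scope ring_scope.

(* Route feasibility bounds the demand of any S by C (1 + sum_{v in S} b_v), so
   y = b is feasible for L*_xi(H); the zero vector is dual feasible since w >= 0.
   LP duality therefore yields an optimal y and optimal duals.  Among the optimal
   duals, minimise sum alpha: the dual of that LP asks for y', t >= 0 with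
   y'(V_+(H')) >= t (k(V_+(H')) - 1) - 1 and y' <= t b, and its value
   w.y' - t L* is at least -L*.  For t <= 1 this is clear; for t > 1,
   min (y' / (t - 1), b) is feasible for L*_xi(H) because the right-hand sides
   k - 1 are integers, so (t - 1) L* <= w.y'.  Duality again gives an optimal
   dual with sum alpha <= L*. *)

Lemma sum_option (V : nmodType) (I : finType) (F : option I -> V) :
  \sum_o F o = F None + \sum_i F (Some i).
Proof.
rewrite (bigD1 None) //=; congr (_ + _).
by rewrite (reindex_omap Some id) => [|[]] //=; apply: eq_bigl => i; rewrite eqxx.
Qed.

Section Sums.
Variable R : pzSemiRingType.

Lemma sum_delta (I : finType) (p : I) (F : I -> R) :
  \sum_k (k == p)%:R * F k = F p.
Proof.
rewrite (bigD1 p) //= eqxx mul1r big1 ?addr0 // => k /negbTE ->.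
by rewrite mul0r.
Qed.

Lemma sumr_mul0l (I : finType) (F : I -> R) : \sum_i 0 * F i = 0.
Proof. by rewrite big1 // => i _; rewrite mul0r. Qed.

Lemma sumr_mul0r (I : finType) (F : I -> R) : \sum_i F i * 0 = 0.
Proof. by rewrite big1 // => i _; rewrite mulr0. Qed.

Lemma exchange_comb (I J : finType) (l : I -> R) (m : I -> J -> R) (F : J -> R) :
  \sum_i l i * \sum_j m i j * F j = \sum_j (\sum_i l i * m i j) * F j.
Proof.
under eq_bigr do rewrite mulr_sumr.
rewrite exchange_big; apply: eq_bigr => j _; rewrite mulr_suml.
by apply: eq_bigr => i _; rewrite mulrA.
Qed.

End Sums.

Section LinearInequalities.
Variable R : realFieldType.

Lemma exists_between (I : finType) (lo up : pred I) (L U : I -> R) :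
  (forall p q, up p -> lo q -> L q <= U p) ->
  exists t, (forall q, lo q -> L q <= t) /\ (forall p, up p -> t <= U p).
Proof.
move=> LU; case: (pickP lo) => [q0 lo_q0 | lo0].
  case: (@arg_maxP _ R I q0 lo L lo_q0) => q lo_q maxq.
  by exists (L q); split=> [q' /maxq | p up_p]; last exact: LU.
case: (pickP up) => [p0 up_p0 | up0].
  case: (@arg_minP _ R I p0 up U up_p0) => p up_p minp.
  by exists (U p); split=> [q | p' /minp]; rewrite ?lo0.
by exists 0; split=> x; rewrite ?lo0 ?up0.
Qed.

Definition lin_solvable (X I : finType) (a : I -> X -> R) (c : I -> R) :=
  exists x : X -> R, forall i, \sum_u a i u * x u <= c i.

Definition lin_certificate (X I : finType) (a : I -> X -> R) (c : I -> R) :=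
  exists lam : I -> R, [/\ forall i, 0 <= lam i,
    forall u, \sum_i lam i * a i u = 0 & \sum_i lam i * c i < 0].

Lemma farkas_zero (X I : finType) (a : I -> X -> R) (c : I -> R) :
  (forall i u, a i u = 0) -> lin_solvable a c \/ lin_certificate a c.
Proof.
move=> a0; case: (pickP (fun i => c i < 0)) => [i ci_lt0 | c_ge0].
  by right; exists (fun k => (k == i)%:R); split=> [k | u |]; rewrite ?sum_delta ?a0.
left; exists (fun _ => 0) => i; rewrite big1 => [|u _]; last by rewrite mulr0.
by rewrite leNgt c_ge0.
Qed.

Section FourierMotzkin.
Variables (X I : finType) (a : I -> X -> R) (c : I -> R) (x0 : X).

(* Row [inl i] keeps the rows of [a] not involving [x0]; row [inr (p, q)]
   combines a row with positive and a row with negative [x0]-coefficient so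
   that [x0] cancels. *)
Definition fm_weight (k : I + I * I) (i : I) : R :=
  match k with
  | inl p => if a p x0 == 0 then (i == p)%:R else 0
  | inr (p, q) => if (0 < a p x0) && (a q x0 < 0)
                  then (i == p)%:R * - a q x0 + (i == q)%:R * a p x0 else 0
  end.

Definition fm_coef k u := \sum_i fm_weight k i * a i u.
Definition fm_rhs k := \sum_i fm_weight k i * c i.

Lemma fm_weight_ge0 k i : 0 <= fm_weight k i.
Proof.
case: k => [p|[p q]] /=; first by case: ifP; rewrite ?ler0n.
case: ifP => // /andP[ap_gt0 aq_lt0].
by rewrite addr_ge0 // mulr_ge0 ?ler0n // ?oppr_ge0 ltW.
Qed.

Lemma sum_fm_weight_inl p (F : I -> R) :
  \sum_i fm_weight (inl p) i * F i = if a p x0 == 0 then F p else 0.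
Proof. by rewrite /=; case: ifP; rewrite ?sum_delta ?big1 // => i; rewrite mul0r. Qed.

Lemma sum_fm_weight_inr p q (F : I -> R) :
  \sum_i fm_weight (inr (p, q)) i * F i =
  if (0 < a p x0) && (a q x0 < 0) then - a q x0 * F p + a p x0 * F q else 0.
Proof.
rewrite /=; case: ifP => _; last by rewrite big1 // => i; rewrite mul0r.
under eq_bigr do rewrite mulrDl -!mulrA.
by rewrite big_split /= !sum_delta.
Qed.

Lemma fm_coef_x0 k : fm_coef k x0 = 0.
Proof.
case: k => [p|[p q]]; rewrite /fm_coef ?sum_fm_weight_inl ?sum_fm_weight_inr.
  by case: eqP.
by case: ifP => // _; rewrite mulrC mulrN addrC subrr.
Qed.

Lemma fm_certificate : lin_certificate fm_coef fm_rhs -> lin_certificate a c.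
Proof.
case=> lam [lam_ge0 lam_a lam_c].
exists (fun i => \sum_k lam k * fm_weight k i); split.
- by move=> i; apply: sumr_ge0 => k _; apply: mulr_ge0 (fm_weight_ge0 k i).
- by move=> u; rewrite -(exchange_comb lam fm_weight (a^~ u)); apply: lam_a.
- by rewrite -(exchange_comb lam fm_weight c).
Qed.

Lemma fm_solvable : lin_solvable fm_coef fm_rhs -> lin_solvable a c.
Proof.
case=> x x_sol.
pose z t u := if u == x0 then t else x u.
pose s i := \sum_u a i u * z 0 u.
have sum_z i t : \sum_u a i u * z t u = s i + a i x0 * t.
  rewrite /s (bigD1 x0) // [in RHS](bigD1 x0) //= /z eqxx mulr0 add0r addrC.
  by congr (_ + _); apply: eq_bigr => u /negbTE ->.
have comb_s k : \sum_i fm_weight k i * s i = \sum_u fm_coef k u * x u.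
  rewrite exchange_comb; apply: eq_bigr => u _; rewrite /z; case: eqP => [->|//].
  by rewrite mulr0 fm_coef_x0 mul0r.
pose bound i := (c i - s i) / a i x0.
have [t [t_lo t_up]] : exists t, (forall q, a q x0 < 0 -> bound q <= t) /\
                                 (forall p, 0 < a p x0 -> t <= bound p).
  apply: exists_between => p q ap_gt0 aq_lt0.
  have := x_sol (inr (p, q)); rewrite -comb_s /fm_rhs !sum_fm_weight_inr.
  rewrite ap_gt0 aq_lt0 /= /bound ler_pdivlMr // => comb.
  rewrite mulrAC ler_ndivrMr //; nra.
exists (z t) => i; rewrite sum_z.
have [aq_lt0|ap_gt0|a0] := ltgtP (a i x0) 0.
- by move: (t_lo i aq_lt0); rewrite /bound ler_ndivrMr //; lra.
- by move: (t_up i ap_gt0); rewrite /bound ler_pdivlMr //; lra.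
- move: (x_sol (inl i)); rewrite -comb_s /fm_rhs !sum_fm_weight_inl a0 eqxx.
  by rewrite mul0r addr0.
Qed.

End FourierMotzkin.

Lemma farkas (X I : finType) (a : I -> X -> R) (c : I -> R) :
  lin_solvable a c \/ lin_certificate a c.
Proof.
suff: forall n (A : {set X}) (I' : finType) (a' : I' -> X -> R) c',
    #|A| = n -> (forall i u, u \notin A -> a' i u = 0) ->
    lin_solvable a' c' \/ lin_certificate a' c'.
  by move/(_ _ [set: X]); apply=> // i u; rewrite in_setT.
elim/ltn_ind=> n IH A I' a' c' An a'_supp.
have [A0|[x0 x0A]] := set_0Vmem A.
  by apply: farkas_zero => i u; apply: a'_supp; rewrite A0 inE.
have [||sol|cert] := IH _ _ (A :\ x0) _ (fm_coef a' x0) (fm_rhs a' c' x0) erefl.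
- by rewrite -An (cardsD1 x0 A) x0A.
- move=> k u; rewrite !inE negb_and negbK => /orP[/eqP->|uA].
    exact: fm_coef_x0.
  by rewrite /fm_coef big1 // => i _; rewrite a'_supp // mulr0.
- by left; apply: fm_solvable sol.
- by right; apply: fm_certificate cert.
Qed.

Lemma farkas_nonneg (X I : finType) (a : I -> X -> R) (c : I -> R) :
  (exists2 x : X -> R, forall u, 0 <= x u & forall i, \sum_u a i u * x u <= c i) \/
  (exists lam : I -> R, [/\ forall i, 0 <= lam i,
     forall u, 0 <= \sum_i lam i * a i u & \sum_i lam i * c i < 0]).
Proof.
pose a' (k : I + X) u := match k with inl i => a i u | inr v => - (u == v)%:R end.
pose c' (k : I + X) := if k is inl i then c i else 0.
have [[x x_sol]|[lam [lam_ge0 lam_a lam_c]]] := farkas a' c'.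
- left; exists x => [u|i]; last exact: (x_sol (inl i)).
  move: (x_sol (inr u)); rewrite /a' /c'.
  by under eq_bigr do rewrite mulNr; rewrite sumrN sum_delta oppr_le0.
- right; exists (lam \o inl); split=> [i|u|]; first exact: lam_ge0.
  + move: (lam_a u); rewrite big_sumType /=.
    under [X in _ + X]eq_bigr do rewrite mulrN mulrC eq_sym.
    by rewrite sumrN sum_delta => /eqP; rewrite subr_eq0 => /eqP ->.
  + move: lam_c; rewrite big_sumType /= [X in _ + X]big1 ?addr0 // => k _.
    by rewrite mulr0.
Qed.

Section LinearProgram.
Variables (I X : finType) (A : I -> X -> R).

Definition lp_feasible (r : I -> R) (y : X -> R) :=
  (forall v, 0 <= y v) /\ (forall i, r i <= \sum_v A i v * y v).

Definition lp_dual_feasible (c : X -> R) (alpha : I -> R) :=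
  (forall i, 0 <= alpha i) /\ (forall v, \sum_i alpha i * A i v <= c v).

Lemma lp_weak_duality r c y alpha :
  lp_feasible r y -> lp_dual_feasible c alpha ->
  \sum_i alpha i * r i <= \sum_v c v * y v.
Proof.
case=> y_ge0 Ay_ge [alpha_ge0 Aalpha_le].
apply: (@le_trans _ _ (\sum_i alpha i * \sum_v A i v * y v)).
  by apply: ler_sum => i _; apply: ler_wpM2l.
by rewrite exchange_comb; apply: ler_sum => v _; apply: ler_wpM2r.
Qed.

Lemma lp_strong_duality r c :
  (exists y, lp_feasible r y) -> (exists alpha, lp_dual_feasible c alpha) ->
  exists y alpha, [/\ lp_feasible r y, lp_dual_feasible c alpha &
                      \sum_v c v * y v <= \sum_i alpha i * r i].
Proof.
move=> [y0 y0_feas] [alpha0 alpha0_feas].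
(* Farkas for the system: y feasible, alpha dual feasible, c.y <= alpha.r. *)
pose K (k : option (I + X)) (u : X + I) : R :=
  match k, u with
  | Some (inl i), inl v => - A i v
  | Some (inr v), inr i => A i v
  | None, inl v => c v
  | None, inr i => - r i
  | _, _ => 0
  end.
pose e (k : option (I + X)) : R :=
  match k with Some (inl i) => - r i | Some (inr v) => c v | None => 0 end.
have [[x x_ge0 x_sol]|[lam [lam_ge0 lam_K lam_e]]] := farkas_nonneg K e.
  exists (x \o inl), (x \o inr); split.
  - split=> [v|i]; first exact: x_ge0.
    move: (x_sol (Some (inl i))); rewrite big_sumType /= sumr_mul0l addr0.
    by under eq_bigr do rewrite mulNr; rewrite sumrN lerN2.
  - split=> [i|v]; first exact: x_ge0.
    move: (x_sol (Some (inr v))); rewrite big_sumType /= sumr_mul0l add0r.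
    by under eq_bigr do rewrite mulrC.
  - move: (x_sol None); rewrite big_sumType /=.
    under [X in _ + X]eq_bigr do rewrite mulNr mulrC.
    by rewrite sumrN subr_le0.
pose mu i := lam (Some (inl i)).
pose nu v := lam (Some (inr v)).
pose tau := lam None.
have mu_ge0 i : 0 <= mu i by apply: lam_ge0.
have nu_ge0 v : 0 <= nu v by apply: lam_ge0.
have col_y v : \sum_i mu i * A i v <= tau * c v.
  move: (lam_K (inl v)); rewrite sum_option big_sumType /= sumr_mul0r addr0.
  by under eq_bigr do rewrite mulrN; rewrite sumrN subr_ge0.
have col_alpha i : tau * r i <= \sum_v A i v * nu v.
  move: (lam_K (inr i)); rewrite sum_option big_sumType /= sumr_mul0r add0r.
  by under eq_bigr do rewrite mulrC; rewrite mulrN addrC subr_ge0.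
have obj : \sum_v nu v * c v < \sum_i mu i * r i.
  move: lam_e; rewrite sum_option big_sumType /= mulr0 add0r.
  by under eq_bigr do rewrite mulrN; rewrite sumrN addrC subr_lt0.
(* By weak duality a certificate with tau > 0 is impossible, and with tau = 0
   it contradicts the feasibility of y0 and alpha0. *)
have tau0 : tau = 0.
  have := lp_weak_duality (conj nu_ge0 col_alpha) (conj mu_ge0 col_y).
  under eq_bigr do rewrite mulrCA; under [X in _ <= X]eq_bigr do rewrite mulrAC -mulrA.
  rewrite -!mulr_sumr => weak.
  by apply/eqP; rewrite eq_le lam_ge0 andbT; nra.
have mu_r : \sum_i mu i * r i <= 0.
  rewrite -[X in _ <= X](sumr_mul0l y0); apply: lp_weak_duality y0_feas _.
  by split=> // v; rewrite (le_trans (col_y v)) // tau0 mul0r.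
have nu_c : 0 <= \sum_v nu v * c v.
  under eq_bigr do rewrite mulrC.
  rewrite -[X in X <= _](sumr_mul0r alpha0); apply: lp_weak_duality _ alpha0_feas.
  by split=> // i; rewrite (le_trans _ (col_alpha i)) // tau0 mul0r.
by move: obj; rewrite ltNge (le_trans mu_r nu_c).
Qed.

End LinearProgram.

Lemma lp_dual_feasible_oapp (I X : finType) (A : I -> X -> R) r c L alpha :
  lp_dual_feasible (fun i => oapp (A i) (- r i)) (oapp c (- L)) alpha <->
  lp_dual_feasible A c alpha /\ L <= \sum_i alpha i * r i.
Proof.
split=> [[alpha_ge0 col]|[[alpha_ge0 col] L_le]].
  split; first by split=> // v; apply: (col (Some v)).
  by move: (col None) => /=; under eq_bigr do rewrite mulrN; rewrite sumrN lerN2.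
split=> // -[v|] /=; first exact: col.
by under eq_bigr do rewrite mulrN; rewrite sumrN lerN2.
Qed.

End LinearInequalities.

Lemma int_le_sum_min (R : realFieldType) (T : finType) (S : {set T}) (k : int)
    (t : R) (z : T -> R) (cap : T -> nat) :
  1 < t -> (forall v, 0 <= z v) -> (forall v, z v <= t * (cap v)%:R) ->
  t * k%:~R - 1 <= \sum_(v in S) z v ->
  k%:~R <= \sum_(v in S) Num.min (z v / (t - 1)) (cap v)%:R.
Proof.
move=> t_gt1 z_ge0 z_le cover.
have t1_gt0 : 0 < t - 1 by rewrite subr_gt0.
pose capped v := (cap v)%:R <= z v / (t - 1).
set B := (\sum_(v in S | capped v) cap v)%N.
set Q := \sum_(v in S | ~~ capped v) z v.
have -> : \sum_(v in S) Num.min (z v / (t - 1)) (cap v)%:R = B%:R + Q / (t - 1).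
  rewrite (bigID capped) /= natr_sum mulr_suml; congr (_ + _); apply: eq_bigr.
    by move=> v /andP[_]; rewrite /capped /Num.min ltNge => ->.
  by move=> v /andP[_]; rewrite /capped -ltNge /Num.min => ->.
have Q_ge0 : 0 <= Q / (t - 1) by rewrite divr_ge0 ?sumr_ge0 ?ltW.
have [k_le|k_gt] := lerP k B%:Z.
  have : k%:~R <= B%:R :> R by rewrite pmulrn ler_int.
  lra.
have capped_le : \sum_(v in S | capped v) z v <= t * B%:R.
  by rewrite natr_sum mulr_sumr; apply: ler_sum => v _; apply: z_le.
have kB1 : B%:R + 1 <= k%:~R :> R.
  by rewrite pmulrn -[1]/(1%:~R) -intrD ler_int lezD1.
have := cover; rewrite (bigID capped) /= -/Q => {}cover.
rewrite -lerBlDl ler_pdivlMr //; nra.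
Qed.

Lemma kcap_le_route_capacity (T : finType) (C : rat) (dxi : T -> rat)
    (b : T -> nat) (S : {set T}) :
  0 < C -> route_feasible C dxi b (enum S) ->
  (kcap C dxi S)%:~R - 1 <= \sum_(v in S) (b v)%:R :> rat.
Proof.
move=> C_gt0 [y [y_le_b [f [g [f_bnd flow]]]]].
set r := enum S in f_bnd flow.
have sum_route (F : T -> rat) :
    \sum_(i < size r) F (tnth (in_tuple r) i) = \sum_(v in S) F v.
  by rewrite -[RHS]big_enum [RHS]big_tnth.
have dem_flow : dem dxi S = f (size r) - f 0%N + \sum_(v in S) g v.
  rewrite /dem -!sum_route -(telescope_sumr _ (leq0n (size r))) big_mkord.
  rewrite -big_split /=; apply: eq_bigr => i _.
  by have [conserve _ _] := flow i; rewrite /= in conserve; lra.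
have g_le : \sum_(v in S) g v <= C * \sum_(v in S) (b v)%:R.
  rewrite mulr_sumr -!sum_route; apply: ler_sum => i _.
  have [_ _ g_le] := flow i; apply: le_trans g_le _.
  by rewrite ler_pM2l // ler_nat.
have kcap_le : kcap C dxi S <= (\sum_(v in S) b v + 1)%N.
  rewrite /kcap ceil_le_int ler_pdivrMr // -pmulrn natrD natr_sum mulrC.
  have /andP[f0_ge0 _] := f_bnd 0%N (leq0n _).
  have /andP[_ fr_le] := f_bnd (size r) (leqnn _).
  lra.
by rewrite lerBlDr -natr_sum natr1 -addn1 pmulrn ler_int.
Qed.

Section SegmentCover.
Variables (T : finType) (C : rat) (dxi : T -> rat) (b : T -> nat) (w : T -> rat)
  (H : seq {set T}).
Local Notation n := (size H).
Local Notation segment := ('I_n * 'I_n)%type.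

Definition covers (p : segment) (v : T) : bool :=
  (p.1 <= p.2)%N && (v \in Vsub H p.1 p.2).

Definition seg_demand (p : segment) : rat :=
  if (p.1 <= p.2)%N then (kcap C dxi (Vsub H p.1 p.2))%:~R - 1 else 0.

(* L*_xi(H) as min cost.y s.t. cover_mx y >= cover_rhs, y >= 0: row [inl (i, j)]
   is the constraint for H' = (S_i, ..., S_j) (the trivial row 0 >= 0 when
   i > j), row [inr u] is -y_u >= -b_u. *)
Definition cover_mx (k : segment + T) (v : T) : rat :=
  match k with inl p => (covers p v)%:R | inr u => - (v == u)%:R end.

Definition cover_rhs (k : segment + T) : rat :=
  match k with inl p => seg_demand p | inr u => - (b u)%:R end.

Definition cost (v : T) : rat := if v \in VH H then w v else 0.

Lemma cover_row_seg p y :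
  \sum_v cover_mx (inl p) v * y v =
  if (p.1 <= p.2)%N then \sum_(v in Vsub H p.1 p.2) y v else 0.
Proof.
rewrite /= /covers; case: leqP => _ /=; last by rewrite sumr_mul0l.
rewrite [RHS]big_mkcond; apply: eq_bigr => v _.
by case: (v \in _); rewrite ?mul1r ?mul0r.
Qed.

Lemma cover_row_cap u y : \sum_v cover_mx (inr u) v * y v = - y u.
Proof.
rewrite /cover_mx; under eq_bigr do rewrite mulNr.
by rewrite sumrN sum_delta.
Qed.

Lemma primal_feasP y :
  primal_feas C dxi b H y <-> lp_feasible cover_mx cover_rhs y.
Proof.
split=> [[seg [cap y_ge0]]|[y_ge0 rows]].
  split=> // -[p|u]; rewrite ?cover_row_seg ?cover_row_cap /=; last by rewrite lerN2.
  by rewrite /seg_demand; case: ifP => // pij; apply: seg.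
split=> [i j ij|].
  by move: (rows (inl (i, j))); rewrite cover_row_seg /= /seg_demand /= ij.
by split=> // v; move: (rows (inr v)); rewrite cover_row_cap lerN2.
Qed.

Lemma primal_objE y : primal_obj w H y = \sum_v cost v * y v.
Proof.
rewrite /primal_obj big_mkcond; apply: eq_bigr => v _.
by rewrite /cost; case: (_ \in _); rewrite ?mul0r.
Qed.

Lemma cap_lp_feasible :
  0 < C -> (forall S : {set T}, route_feasible C dxi b (enum S)) ->
  lp_feasible cover_mx cover_rhs (fun v => (b v)%:R).
Proof.
move=> C_gt0 routes; apply/primal_feasP; split=> [i j _|].
  exact: kcap_le_route_capacity.
by split=> v; rewrite ?ler0n.
Qed.

Definition seg_alpha (a : segment + T -> rat) (i j : 'I_n) : rat := a (inl (i, j)).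

Definition seg_beta (a : segment + T -> rat) (v : T) : rat := - a (inr v).

Definition cover_dual (alpha : 'I_n -> 'I_n -> rat) (beta : T -> rat)
    (k : segment + T) : rat :=
  match k with
  | inl p => if (p.1 <= p.2)%N then alpha p.1 p.2 else 0
  | inr v => - beta v
  end.

Lemma sum_segments (P : 'I_n -> 'I_n -> bool) (F : 'I_n -> 'I_n -> rat) :
  \sum_(p : segment) F p.1 p.2 * (P p.1 p.2)%:R = \sum_i \sum_(j | P i j) F i j.
Proof.
under [RHS]eq_bigr do rewrite big_mkcond; rewrite pair_big.
by apply: eq_bigr => -[i j] _ /=; case: (P i j); rewrite ?mulr1 ?mulr0.
Qed.

Lemma cover_col a v :
  \sum_k a k * cover_mx k v = alpha_at (seg_alpha a) v + seg_beta a v.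
Proof.
rewrite big_sumType /alpha_at -sum_segments; congr (_ + _).
  by apply: eq_bigr => -[i j].
under eq_bigr do rewrite /= mulrN mulrC eq_sym.
by rewrite sumrN sum_delta.
Qed.

Lemma cover_dual_obj a :
  \sum_k a k * cover_rhs k = dual_obj C dxi b (seg_alpha a) (seg_beta a).
Proof.
rewrite big_sumType /dual_obj -sum_segments; congr (_ + _).
  apply: eq_bigr => -[i j] _; rewrite /= /seg_demand /=.
  by case: leqP; rewrite ?mulr1 ?mulr0.
by apply: eq_bigr => v _; rewrite /= mulrN mulNr.
Qed.

Definition count_rhs (k : segment + T) : rat :=
  if k is inl p then - ((p.1 <= p.2)%N)%:R else 0.

Lemma alpha_sumE a : alpha_sum (seg_alpha a) = - \sum_k a k * count_rhs k.
Proof.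
rewrite big_sumType /= sumr_mul0r addr0 /alpha_sum -sum_segments -sumrN.
by apply: eq_bigr => -[i j] _; rewrite mulrN opprK mulrC.
Qed.

Lemma dual_feas_seg a :
  lp_dual_feasible cover_mx cost a -> dual_feas w (seg_alpha a) (seg_beta a).
Proof.
case=> a_ge0 col; split=> [i j _|]; first exact: a_ge0.
by split=> v; [rewrite oppr_le0 | rewrite -cover_col].
Qed.

Lemma cover_dual_feasible alpha beta :
  dual_feas w alpha beta -> lp_dual_feasible cover_mx cost (cover_dual alpha beta).
Proof.
case=> alpha_ge0 [beta_le0 col]; split=> [[p|v]|v] /=.
- by case: leqP => // pij; apply: alpha_ge0.
- by rewrite oppr_ge0.
- rewrite cover_col /seg_beta opprK; congr (_ + _ <= _): (col v).
  by apply: eq_bigr => i _; apply: eq_bigr => j /andP[ij _]; rewrite /seg_alpha /= ij.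
Qed.

Lemma dual_obj_cover_dual alpha beta :
  \sum_k cover_dual alpha beta k * cover_rhs k = dual_obj C dxi b alpha beta.
Proof.
rewrite cover_dual_obj /dual_obj; congr (_ + _).
  by apply: eq_bigr => i _; apply: eq_bigr => j ij; rewrite /seg_alpha /= ij.
by apply: eq_bigr => v _; rewrite /seg_beta /= opprK.
Qed.

Lemma cost_ge0 : (forall v, 0 <= w v) -> forall v, 0 <= cost v.
Proof. by move=> w_ge0 v; rewrite /cost; case: ifP. Qed.

(* [y2] is feasible for the dual of maximising alpha.count_rhs (= - alpha_sum)
   over the face {alpha dual feasible, alpha.cover_rhs >= L}; [y2 None] is the
   multiplier of the face constraint. *)
Lemma face_lp_value_ge (L : rat) (y2 : option T -> rat) :
  (forall v, 0 <= w v) -> 0 <= L ->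
  (forall y, lp_feasible cover_mx cover_rhs y -> L <= \sum_v cost v * y v) ->
  lp_feasible (fun k => oapp (cover_mx k) (- cover_rhs k)) count_rhs y2 ->
  - L <= \sum_o oapp cost (- L) o * y2 o.
Proof.
move=> w_ge0 L_ge0 L_opt [y2_ge0 rows].
rewrite sum_option /=.
have y2_le v : y2 (Some v) <= y2 None * (b v)%:R.
  by move: (rows (inr v)); rewrite sum_option /= cover_row_cap opprK; lra.
have cost_y2_ge0 : 0 <= \sum_v cost v * y2 (Some v).
  by apply: sumr_ge0 => v _; rewrite mulr_ge0 ?cost_ge0.
have [t_le1|t_gt1] := lerP (y2 None) 1; first nra.
pose Y v := Num.min (y2 (Some v) / (y2 None - 1)) (b v)%:R.
have Y_feas : lp_feasible cover_mx cover_rhs Y.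
  split=> [v|[p|u]]; rewrite ?cover_row_seg ?cover_row_cap /=.
  - by rewrite le_min ler0n andbT divr_ge0 // subr_ge0 ltW.
  - rewrite /seg_demand; case: leqP => // pij.
    have := int_le_sum_min (S := Vsub H p.1 p.2)
      (k := kcap C dxi (Vsub H p.1 p.2) - 1) t_gt1 (fun v => y2_ge0 (Some v)) y2_le.
    rewrite rmorphB rmorph1; apply; move: (rows (inl p)).
    by rewrite sum_option /= cover_row_seg /seg_demand pij mulr1n; lra.
  - by rewrite lerN2 ge_min lexx orbT.
have cost_Y :
    \sum_v cost v * Y v <= (\sum_v cost v * y2 (Some v)) / (y2 None - 1).
  rewrite mulr_suml; apply: ler_sum => v _.
  by rewrite -mulrA ler_wpM2l ?cost_ge0 // ge_min lexx.
have := le_trans (L_opt Y Y_feas) cost_Y; rewrite ler_pdivlMr ?subr_gt0 //.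
by rewrite mulrBr mulr1; lra.
Qed.

Lemma face_dual_alpha_sum_le (L : rat) :
  (forall v, 0 <= w v) -> 0 <= L ->
  (forall y, lp_feasible cover_mx cover_rhs y -> L <= \sum_v cost v * y v) ->
  (exists2 alpha, lp_dual_feasible cover_mx cost alpha &
                  L <= \sum_k alpha k * cover_rhs k) ->
  exists alpha, [/\ lp_dual_feasible cover_mx cost alpha,
                    L <= \sum_k alpha k * cover_rhs k &
                    alpha_sum (seg_alpha alpha) <= L].
Proof.
move=> w_ge0 L_ge0 L_opt [alpha alpha_feas L_le].
have [||y2 [alpha2 [y2_feas /lp_dual_feasible_oapp[alpha2_feas L_le2] face_le]]] :=
  lp_strong_duality (A := fun k => oapp (cover_mx k) (- cover_rhs k))
    (r := count_rhs) (c := oapp cost (- L)).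
- by exists (fun=> 0); split=> // -[p|u]; rewrite sumr_mul0r ?oppr_le0.
- by exists alpha; apply/lp_dual_feasible_oapp.
exists alpha2; split=> //; rewrite alpha_sumE lerNl.
exact: le_trans (face_lp_value_ge w_ge0 L_ge0 L_opt y2_feas) face_le.
Qed.

End SegmentCover.

Theorem lemma8 (T : finType) (N : nat) (C : rat) (d : 'I_N -> T -> rat)
    (w : T -> rat) (b : T -> nat)
    (hC : 0 < C)
    (hd0 : forall xi v, 0 <= d xi v)
    (hdC : forall xi v, d xi v <= C)
    (hw : forall v, 0 <= w v)
    (hwb : standing_wb C d b)
    (H : seq {set T}) (hH : partial_route H) (xi : 'I_N) :
  exists y : T -> rat,
    [/\ primal_feas C (d xi) b H y,
        (forall y', primal_feas C (d xi) b H y' ->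
           primal_obj w H y <= primal_obj w H y') &
    exists (alpha : 'I_(size H) -> 'I_(size H) -> rat) (beta : T -> rat),
      [/\ dual_feas w alpha beta,
          (forall (alpha' : 'I_(size H) -> 'I_(size H) -> rat) (beta' : T -> rat), dual_feas w alpha' beta' ->
             dual_obj C (d xi) b alpha' beta' <= dual_obj C (d xi) b alpha beta),
          alpha_sum alpha <= primal_obj w H y &
          (forall v, w v = 0 -> alpha_at alpha v + beta v <= 0)]].
Proof.
pose A := @cover_mx T H; pose r := cover_rhs C (d xi) b (H := H); pose c := cost w H.
have b_feas := cap_lp_feasible H hC (fun S => hwb xi _ (enum_uniq S)).
have zero_feas : lp_dual_feasible A c (fun=> 0).
  by split=> // v; rewrite sumr_mul0l cost_ge0.
have [y [alpha [y_feas alpha_feas y_le]]] :=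
  lp_strong_duality (ex_intro _ _ b_feas) (ex_intro _ _ zero_feas).
set L := \sum_v c v * y v in y_le.
have L_opt y' : lp_feasible A r y' -> L <= \sum_v c v * y' v.
  by move=> y'_feas; apply: le_trans y_le (lp_weak_duality y'_feas alpha_feas).
have L_ge0 : 0 <= L by apply: sumr_ge0 => v _; rewrite mulr_ge0 ?cost_ge0 ?y_feas.1.
have [alpha2 [alpha2_feas L_le sum_le]] :=
  face_dual_alpha_sum_le hw L_ge0 L_opt (ex_intro2 _ _ alpha alpha_feas y_le).
exists y; split.
- exact/primal_feasP.
- by move=> y' /primal_feasP y'_feas; rewrite !primal_objE; apply: L_opt.
exists (seg_alpha alpha2), (seg_beta alpha2).
have [_ [_ col2]] := dual_feas_seg alpha2_feas.
split=> [||| v wv0].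
- exact: dual_feas_seg.
- move=> alpha' beta' /cover_dual_feasible feas'.
  rewrite -cover_dual_obj -dual_obj_cover_dual.
  exact: le_trans (lp_weak_duality y_feas feas') L_le.
- by rewrite primal_objE.
- by move: (col2 v); rewrite wv0; case: ifP.
Qed.
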